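(* For a topological space $X$ the following statements are equivalent: (a) $C(X)$ has the countable sup property; (b) $C_b(X)$ has the countable sup property; (c) $X$ satisfies CCC for cozero sets.
   Context: $C(X)$ is the vector lattice of all real-valued continuous functions on $X$ with the pointwise order, and $C_b(X)$ its sublattice of bounded functions. A vector lattice has the countable sup property if every nonempty subset possessing a supremum contains a countable subset with the same supremum. A subset $U\subseteq X$ is a cozero set if $U=\{x: f(x)\neq 0\}$ for some $f\in C(X)$; $X$ satisfies CCC for cozero sets if every collection of pairwise disjoint cozero sets is countable. *)

From HB Require Import structures.
From mathcomp Require Import all_boot all_order all_algebra.
From mathcomp Require Import all_classical all_reals all_analysis.
Set Implicit Arguments. Unset Strict Implicit. Unset Printing Implicit Defensive.
Import Order.TTheory GRing.Theory Num.Theory numFieldNormedType.Exports.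
Local Open Scope classical_set_scope.
Local Open Scope ring_scope.

Definition Cfun (X : topologicalType) (R : realType) : set (X -> R) :=
  [set f : X -> R | continuous f].

Definition Cbfun (X : topologicalType) (R : realType) : set (X -> R) :=
  [set f : X -> R | continuous f /\ exists M : R, forall x, `|f x| <= M].

Definition is_sup_in (X : Type) (R : realType) (V S : set (X -> R)) (f : X -> R) :=
  V f /\ (forall g, S g -> forall x, g x <= f x) /\
  (forall h, V h -> (forall g, S g -> forall x, g x <= h x) -> forall x, f x <= h x).

Definition countable_sup_property (X : Type) (R : realType) (V : set (X -> R)) :=
  forall S : set (X -> R), S `<=` V -> S !=set0 ->
  forall f, is_sup_in V S f ->
  exists S' : set (X -> R), [/\ S' `<=` S, countable S' & is_sup_in V S' f].

Definition cozero_set (X : topologicalType) (R : realType) (U : set X) :=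
  exists f : X -> R, continuous f /\ U = [set x | f x != 0].

Definition CCC_cozero (X : topologicalType) (R : realType) :=
  forall F : set (set X),
    (forall U, F U -> cozero_set R U) ->
    (forall U V, F U -> F V -> U <> V -> U `&` V = set0) ->
    countable F.

Arguments Cfun : clear implicits.
Arguments Cbfun : clear implicits.
Arguments CCC_cozero : clear implicits.

From mathcomp Require Import all_boot all_order all_algebra.
From mathcomp Require Import all_classical all_reals all_analysis.
From mathcomp Require Import lra.
Set Implicit Arguments. Unset Strict Implicit. Unset Printing Implicit Defensive.
Import Order.TTheory GRing.Theory Num.Theory numFieldNormedType.Exports.
Local Open Scope classical_set_scope.
Local Open Scope ring_scope.

(* Of C(X) and C_b(X) only three features are used: they consist of continuous
   functions, contain the continuous [0,1]-valued functions, and are closed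
   under subtracting those.

   CSP => CCC: given pairwise disjoint cozero sets F, the continuous
   [0,1]-valued functions that vanish on or off each member of F have
   supremum 1, since bumps supported in a single member of F (or off all of
   them) reach 1 wherever an upper bound drops below 1. Each such function is
   nonzero on at most one member of F, and a nonempty member on which all
   functions of a subfamily vanish leaves room under 1 for a smaller upper
   bound; so a countable subfamily with supremum 1 meets all of F.

   CCC => CSP: if f = sup S, fix e = 1/(n+1) and take a maximal disjoint
   family of cozero sets on each of which some g in S exceeds f - e. It is
   countable by CCC, and the chosen g's already bound every upper bound from
   below by f - e: otherwise the set where the upper bound is below f - e
   contains a nonempty cozero set of the same kind disjoint from the family. *)

Definition pointwise_ub (X : Type) (R : realType) (S : set (X -> R)) (h : X -> R) :=
  forall g, S g -> forall x, g x <= h x.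

Lemma countable_setU T (A B : set T) : countable A -> countable B -> countable (A `|` B).
Proof.
move=> cA cB.
have -> : A `|` B = \bigcup_(i in [set: bool]) (if i then A else B).
  apply/seteqP; split => x; first by case=> ?; [exists true|exists false].
  by case=> -[] _ /= ?; [left|right].
by apply: bigcup_countable => [|[]].
Qed.

Section real_functions.
Context {R : realType} {X : topologicalType}.
Implicit Types (f g k : X -> R) (U W : set X).

Lemma sub_fun_continuous f g :
  continuous f -> continuous g -> continuous (fun x => f x - g x).
Proof. by move=> cf cg x; exact: continuousB (cf x) (cg x). Qed.

Lemma mul_fun_continuous f g :
  continuous f -> continuous g -> continuous (fun x => f x * g x).
Proof. by move=> cf cg x; exact: continuousM (cf x) (cg x). Qed.

Lemma norm_fun_continuous f : continuous f -> continuous (fun x => `|f x|).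
Proof. by move=> cf x; apply: cvg_norm; exact: cf. Qed.

Definition unit_valued k := forall x, 0 <= k x <= 1.

Lemma cozero_setI U W :
  cozero_set R U -> cozero_set R W -> cozero_set R (U `&` W).
Proof.
move=> [u [cu ->]] [w [cw ->]]; exists (fun x => u x * w x).
split; first exact: mul_fun_continuous.
by apply/seteqP; split => x /=; rewrite mulf_eq0 negb_or => /andP.
Qed.

Lemma cozero_set_lt f g :
  continuous f -> continuous g -> cozero_set R [set x | f x < g x].
Proof.
move=> cf cg; exists (fun x => Num.max (g x - f x) 0); split.
  by apply: max_fun_continuous; [exact: sub_fun_continuous|exact: cst_continuous].
apply/seteqP; split => x /=; first by move=> fg; rewrite gt_eqF // lt_max subr_gt0 fg.
by apply: contraNT; rewrite -leNgt -subr_le0 => ?; apply/eqP/max_r.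
Qed.

Lemma continuous_bump (phi : X -> R) x1 :
  continuous phi -> (forall x, 0 <= phi x) -> 0 < phi x1 ->
  exists2 k, continuous k &
    [/\ unit_valued k, k x1 = 1 & forall x, phi x = 0 -> k x = 0].
Proof.
move=> cphi phi_ge0 phi_x1; exists (fun x => Num.min (phi x / phi x1) 1).
  apply: min_fun_continuous; last exact: cst_continuous.
  by apply: mul_fun_continuous => //; exact: cst_continuous.
split=> [x||x ->].
- by rewrite le_min ge_min lexx orbT ler01 !andbT divr_ge0 // ltW.
- by rewrite divff ?gt_eqF // minxx.
- by rewrite mul0r; apply/min_idPl; exact: ler01.
Qed.

Lemma countable_disjoint_cozero (A : set (set X)) :
  CCC_cozero X R -> A `<=` cozero_set R -> trivIset A id -> countable A.
Proof.
move=> ccc A_cozero A_disj; apply: ccc => // U W AU AW UW.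
by apply/seteqP; split => // x UWx; apply: UW; apply: A_disj => //; exists x.
Qed.

End real_functions.

Section countable_sup_CCC.
Context {R : realType} {X : topologicalType} (V : set (X -> R)).
Hypothesis V_continuous : forall h, V h -> continuous h.
Hypothesis unit_valued_V : forall k, continuous k -> unit_valued k -> V k.

Section disjoint_cozero_family.
Variable F : set (set X).
Hypothesis F_cozero : forall U, F U -> cozero_set R U.
Hypothesis F_disjoint : forall U W, F U -> F W -> U <> W -> U `&` W = set0.

Definition subordinate (k : X -> R) :=
  forall U, F U -> (forall x, U x -> k x = 0) \/ (forall x, ~ U x -> k x = 0).

Definition subordinate_bumps :=
  [set k : X -> R | [/\ continuous k, unit_valued k & subordinate k]].

Lemma subordinate_bump_above (h : X -> R) x0 :
  continuous h -> h x0 < 1 -> exists2 k, subordinate_bumps k & exists x1, h x1 < k x1.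
Proof.
move=> ch hx0; pose w x := Num.max ((1 + h x0) / 2 - h x) 0.
have cw : continuous w.
  apply: max_fun_continuous; last exact: cst_continuous.
  by apply: sub_fun_continuous => //; exact: cst_continuous.
have w_ge0 x : 0 <= w x by rewrite le_max lexx orbT.
have w_gt0 x : 0 < w x -> h x < 1 by rewrite lt_max ltxx orbF subr_gt0; lra.
have [[U FU [x1 Ux1 wx1]]|off_F] :=
    pselect (exists2 U, F U & exists2 x1, U x1 & 0 < w x1).
  have [u [cu Ue]] := F_cozero FU.
  have u0 x : ~ U x -> u x = 0 by rewrite Ue /= => /negP; rewrite negbK => /eqP.
  have ux1 : 0 < `|u x1| by rewrite normr_gt0; move: Ux1; rewrite Ue.
  have [k ck [k01 kx1 k0]] := continuous_bump (x1 := x1)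
    (mul_fun_continuous cw (norm_fun_continuous cu))
    (fun x => mulr_ge0 (w_ge0 x) (normr_ge0 _)) (mulr_gt0 wx1 ux1).
  exists k; last by exists x1; rewrite kx1; exact: w_gt0.
  split=> // U' FU'; have [->|U'U] := pselect (U' = U).
    by right=> x /u0 ux; apply: k0; rewrite ux normr0 mulr0.
  left=> x U'x; apply: k0; rewrite u0 ?normr0 ?mulr0 // => Ux.
  by have /seteqP[/(_ x (conj Ux U'x))] := F_disjoint FU FU' (nesym U'U).
have wx0 : 0 < w x0 by rewrite lt_max ltxx orbF subr_gt0; lra.
have [k ck [k01 kx0 k0]] := continuous_bump (x1 := x0) cw w_ge0 wx0.
exists k; last by exists x0; rewrite kx0.
split=> // U FU; left=> x Ux; apply: k0; apply/eqP; rewrite eq_le w_ge0 andbT.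
by rewrite leNgt; apply/negP => wx; apply: off_F; exists U => //; exists x.
Qed.

Lemma is_sup_subordinate_bumps : is_sup_in V subordinate_bumps (fun=> 1).
Proof.
split; first by apply: unit_valued_V => [|x]; [exact: cst_continuous|rewrite ler01 lexx].
split=> [k [_ k01 _] x|h Vh h_ub x0]; first by case/andP: (k01 x).
rewrite leNgt; apply/negP => hx0.
have [k Sk [x1]] := subordinate_bump_above (V_continuous Vh) hx0.
by rewrite ltNge h_ub.
Qed.

Definition touched (k : X -> R) := [set U | F U /\ exists2 x, U x & k x != 0].

Lemma countable_touched k : subordinate k -> countable (touched k).
Proof.
move=> k_sub.
have touched_uniq U W : touched k U -> touched k W -> U = W.
  move=> [FU [x Ux kx]] [FW [y Wy ky]]; apply: contrapT => UW.
  have /seteqP[/(_ y) UWy _] := F_disjoint FU FW UW.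
  case: (k_sub U FU) => [/(_ x Ux)/eqP|k0]; first by rewrite (negbTE kx).
  apply: UWy; split=> //; apply: contrapT => /k0/eqP.
  by rewrite (negbTE ky).
have [[U0 TU0]|no_touched] := pselect (touched k !=set0).
  apply: sub_countable (countable1 U0); apply: subset_card_le => U TU.
  exact: touched_uniq TU TU0.
suff -> : touched k = set0 by [].
by apply/seteqP; split => // U TU; apply: no_touched; exists U.
Qed.

End disjoint_cozero_family.

Lemma cozero_set0_of_sup_one (S : set (X -> R)) U :
  is_sup_in V S (fun=> 1) -> (forall k, S k -> unit_valued k) ->
  cozero_set R U -> (forall k x, S k -> U x -> k x = 0) -> U = set0.
Proof.
move=> [_ [_ one_least]] S01 [u [cu ->]] S0.
pose g x := 1 - Num.min `|u x| 1.
have g_ge1 : forall x, 1 <= g x.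
  apply: one_least.
    apply: unit_valued_V => [|x].
      apply: sub_fun_continuous; first exact: cst_continuous.
      by apply: min_fun_continuous; [exact: norm_fun_continuous|exact: cst_continuous].
    have : 0 <= Num.min `|u x| 1 <= 1 by rewrite le_min normr_ge0 ler01 ge_min lexx orbT.
    by rewrite /g; lra.
  move=> k Sk x; have [ux|ux] := eqVneq (u x) 0.
    by rewrite /g ux normr0 (min_idPl ler01) subr0; case/andP: (S01 k Sk x).
  by rewrite (S0 k x Sk ux) /g subr_ge0 ge_min lexx orbT.
apply/seteqP; split=> // x /= ux; have := g_ge1 x.
by rewrite /g lerDl oppr_ge0 ge_min leNgt normr_gt0 ux /= ler10.
Qed.

Lemma countable_sup_CCC : countable_sup_property V -> CCC_cozero X R.
Proof.
move=> csp F F_cozero F_disjoint.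
have zero_bump : subordinate_bumps F (fun=> 0).
  by split=> [|x|U _]; [exact: cst_continuous|rewrite lexx ler01|left].
have bumps_V : subordinate_bumps F `<=` V by move=> k [ck k01 _]; exact: unit_valued_V.
have [S' [S'_bumps cS' S'_sup]] := csp _ bumps_V (ex_intro _ _ zero_bump) _
  (is_sup_subordinate_bumps F_cozero F_disjoint).
have F_touched : F `<=` (\bigcup_(k in S') touched F k) `|` [set set0].
  move=> U FU; have [[k S'k TkU]|untouched] := pselect (exists2 k, S' k & touched F k U).
    by left; exists k.
  right; apply: cozero_set0_of_sup_one S'_sup _ (F_cozero U FU) _.
    by move=> k /S'_bumps[].
  move=> k x S'k Ux; apply: contrapT => /eqP kx.
  by apply: untouched; exists k => //; split=> //; exists x.
apply: sub_countable (subset_card_le F_touched) _; apply: countable_setU => //.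
by apply: bigcup_countable => // k /S'_bumps[_ _ /countable_touched]; apply.
Qed.

End countable_sup_CCC.

Section CCC_countable_sup.
Context {R : realType} {X : topologicalType} (V : set (X -> R)).
Hypothesis V_continuous : forall h, V h -> continuous h.
Hypothesis V_subr_unit_valued :
  forall f k, V f -> continuous k -> unit_valued k -> V (fun x => f x - k x).

Section supremum.
Variables (S : set (X -> R)) (f : X -> R).
Hypotheses (S_V : S `<=` V) (f_sup : is_sup_in V S f).

Lemma sup_approx_on_cozero e (w : X -> R) x0 : 0 < e <= 1 ->
  continuous w -> 0 < w x0 -> exists2 g, S g & exists x1, 0 < w x1 /\ f x1 - e < g x1.
Proof.
move=> /andP[e_gt0 e_le1] cw wx0; apply: contrapT => far.
pose k x := Num.min (Num.max (w x) 0) e.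
have ck : continuous k.
  apply: min_fun_continuous; last exact: cst_continuous.
  by apply: max_fun_continuous => //; exact: cst_continuous.
have k_bounds x : 0 <= k x <= e by rewrite le_min le_max lexx orbT ltW //= ge_min lexx orbT.
have k01 : unit_valued k by move=> x; have := k_bounds x; lra.
have ub : pointwise_ub S (fun x => f x - k x).
  move=> g Sg x; have [wx|wx] := ltP 0 (w x).
    have : g x <= f x - e.
      by rewrite leNgt; apply/negP => gx; apply: far; exists g => //; exists x.
    by move/le_trans; apply; rewrite lerB // ge_min lexx orbT.
  rewrite /k (max_r wx) (min_idPl (ltW e_gt0)) subr0; exact: f_sup.2.1.
have := f_sup.2.2 _ (V_subr_unit_valued f_sup.1 ck k01) ub x0.
have : 0 < k x0 by rewrite lt_min lt_max wx0 e_gt0.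
lra.
Qed.

Definition approximating_cozero e :=
  [set U | cozero_set R U /\ exists2 g, S g & U `<=` [set x | f x - e < g x]].

Lemma maximal_disjoint_approx_ub e A (G : set X -> X -> R) h : 0 < e <= 1 ->
  maximal_disjoint_subcollection id A (approximating_cozero e) ->
  (forall U, A U -> U `<=` [set x | f x - e < G U x]) ->
  V h -> (forall U, A U -> forall x, G U x <= h x) -> forall x, f x - e <= h x.
Proof.
move=> e01 [A_approx A_disj A_max] G_approx Vh h_ub x0.
rewrite leNgt; apply/negP => hx0.
pose w x := f x - h x - e.
have cw : continuous w.
  apply: sub_fun_continuous; last exact: cst_continuous.
  by apply: sub_fun_continuous; apply: V_continuous => //; exact: f_sup.1.
have wx0 : 0 < w x0 by rewrite /w; lra.
have [g Sg [x1 [wx1 gx1]]] := sup_approx_on_cozero e01 cw wx0.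
pose Z := [set x | 0 < w x] `&` [set x | f x - e < g x].
have Z_approx : approximating_cozero e Z.
  split; last by exists g => // x [].
  apply: cozero_setI; first by apply: cozero_set_lt => //; exact: cst_continuous.
  apply: cozero_set_lt; last exact/V_continuous/S_V.
  by apply: sub_fun_continuous; [exact: V_continuous f_sup.1|exact: cst_continuous].
have Z_disj U : A U -> U `&` Z = set0.
  move=> AU; apply/seteqP; split => // x [Ux [/= wx _]]; apply: False_ind.
  have /= := G_approx U AU x Ux; have := h_ub U AU x.
  by rewrite /w in wx; lra.
apply: (A_max (A `|` [set Z])).
- split; first by move=> U AU; left.
  move=> /(_ Z (or_intror erefl)) AZ.
  by have /seteqP[/(_ x1) + _] := Z_disj Z AZ; apply.
- by move=> U [/A_approx|->].
- move=> U W [AU|->] [AW|->] //; first exact: A_disj.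
    by rewrite Z_disj // => -[].
  by rewrite setIC Z_disj // => -[].
Qed.

Lemma countable_approx_subfamily e : CCC_cozero X R -> 0 < e <= 1 ->
  exists2 S', S' `<=` S /\ countable S' &
    forall h, V h -> pointwise_ub S' h -> forall x, f x - e <= h x.
Proof.
move=> ccc e01.
have [A A_max] := ex_maximal_disjoint_subcollection id (approximating_cozero e).
have [A_approx A_disj _] := A_max.
have /choice[G G_approx] : forall U, exists g, A U -> S g /\ U `<=` [set x | f x - e < g x].
  move=> U; have [AU|nAU] := pselect (A U); last by exists f.
  by have [_ [g Sg Ug]] := A_approx U AU; exists g.
exists (G @` A); first split.
- by move=> _ [U AU <-]; case: (G_approx U AU).
- apply: sub_countable (card_image_le _ _) _; apply: countable_disjoint_cozero ccc _ A_disj.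
  by move=> U /A_approx[].
- move=> h Vh h_ub; apply: (maximal_disjoint_approx_ub (G := G) e01 A_max _ Vh).
    by move=> U /G_approx[].
  by move=> U AU; apply: h_ub; exists U.
Qed.

End supremum.

Lemma CCC_countable_sup : CCC_cozero X R -> countable_sup_property V.
Proof.
move=> ccc S S_V _ f f_sup.
have /choice[T T_approx] : forall n : nat, exists S', (S' `<=` S /\ countable S') /\
    forall h, V h -> pointwise_ub S' h -> forall x, f x - n.+1%:R^-1 <= h x.
  move=> n; have [|S' ? ?] := countable_approx_subfamily S_V f_sup ccc (e := n.+1%:R^-1).
    by rewrite invr_gt0 ltr0n invf_le1 ?ler1n.
  by exists S'.
exists (\bigcup_n T n); split.
- by move=> g [n _ /(T_approx n).1.1].
- by apply: bigcup_countable => // n _; exact: (T_approx n).1.2.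
split; first exact: f_sup.1.
split=> [g [n _ /(T_approx n).1.1]|h Vh h_ub x]; first exact: f_sup.2.1.
rewrite leNgt; apply/negP => /ltr_add_invr[n]; apply/negP; rewrite -leNgt -lerBlDr.
by apply: (T_approx n).2 => // g Tg; apply: h_ub; exists n.
Qed.

End CCC_countable_sup.

Section function_spaces.
Context (R : realType) (X : topologicalType).

Lemma countable_sup_Cfun_CCC : countable_sup_property (Cfun X R) <-> CCC_cozero X R.
Proof.
split; first exact: countable_sup_CCC.
by apply: CCC_countable_sup => // f k cf ck _; exact: sub_fun_continuous.
Qed.

Lemma countable_sup_Cbfun_CCC : countable_sup_property (Cbfun X R) <-> CCC_cozero X R.
Proof.
have unit_valued_norm (k : X -> R) x : unit_valued k -> `|k x| <= 1.
  by move=> /(_ x)/andP[k_ge0 k_le1]; rewrite ger0_norm.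
split; [apply: countable_sup_CCC|apply: CCC_countable_sup] => [h []//|k ck k01|h []//|].
  by split=> //; exists 1 => x; exact: unit_valued_norm.
move=> f k [cf [M f_le]] ck k01; split; first exact: sub_fun_continuous.
exists (M + 1) => x; apply: le_trans (ler_normB _ _) _.
by apply: lerD => //; exact: unit_valued_norm.
Qed.

End function_spaces.

Theorem proposition4p7 (R : realType) (X : topologicalType) :
  (countable_sup_property (Cfun X R) <-> countable_sup_property (Cbfun X R)) /\
  (countable_sup_property (Cbfun X R) <-> CCC_cozero X R).
Proof. by rewrite countable_sup_Cfun_CCC countable_sup_Cbfun_CCC. Qed.
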